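(* Let $\mathcal C\subseteq\mathbb F_q^n$ be a linear code of dimension $k$ with parity check matrix $H$, and let $\prec$ be an admissible order on $[X]$. Run Algorithm P (described in the context) on $H$. Then the algorithm terminates, and its output $(N,\phi)$ satisfies: $N$ is a set of canonical forms for $\mathcal C$ (properties (C1)–(C4) below), and $\phi$ is defined on all of $N\times X$, takes values in $N$, and satisfies $\xi(\phi(w,x))=\xi(wx)$ for all $w\in N$, $x\in X$.
   Context: Let $p$ be a prime, $q=p^m$, and fix $\alpha\in\mathbb F_q$ a root of an irreducible polynomial of degree $m$ over $\mathbb F_p$, so each element of $\mathbb F_q$ is uniquely $a_0+a_1\alpha+\dots+a_{m-1}\alpha^{m-1}$ with $a_i\in\mathbb F_p$. A linear code $\mathcal C\subseteq\mathbb F_q^n$ of dimension $k$ has a parity check matrix $H$, an $n\times(n-k)$ matrix over $\mathbb F_q$ with $\mathcal C=\{c: cH=0\}$ (vectors are rows). Let $[X]$ be the free commutative monoid on the $nm$ variables $X=\{x_{ij}:1\le i\le n,1\le j\le m\}$ (also written $x_k$, $k=(i-1)m+j$). Let $\psi:[X]\to(\mathbb F_q^n,+)$ be the monoid morphism with $\psi(x_{ij})=\alpha^{j-1}e_i$ ($e_i$ the $i$-th unit vector), i.e. $\psi(\prod x_{ij}^{\beta_{ij}})$ has $i$-th coordinate $\sum_j\beta_{ij}\alpha^{j-1}$ computed in $\mathbb F_q$. Put $\xi(w)=\psi(w)H$ (the syndrome of $w$). For $w\in[X]$ let $\mathrm{Ind}(w)=\{i:\exists j,\ x_{ij}\mid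 w\}$. Given an admissible (monomial) order $\prec$ on $[X]$, the error-vector order is: $u<_e w$ iff $|\mathrm{Ind}(u)|<|\mathrm{Ind}(w)|$, or $|\mathrm{Ind}(u)|=|\mathrm{Ind}(w)|$ and $u\prec w$; it is a total order on $[X]$. A set of canonical forms for $\mathcal C$ is a set $N\subseteq[X]$ with (C1) $1\in N$; (C2) $|N|=q^{n-k}$; (C3) distinct elements of $N$ have distinct syndromes $\xi$; (C4) every $w\in N\setminus\{1\}$ can be written $w=w'x$ with $w'\in N$, $x\in X$. Algorithm P: keep a list $L$ of words sorted increasingly by $<_e$, a set $N$ (initially $L=(1)$, $N=\emptyset$). While $L\neq\emptyset$: remove the $<_e$-smallest word $w$ from $L$. If some $w_j\in N$ has $\xi(w_j)=\xi(w)$, then for each variable $x_k$ with $w=ux_k$ and $u\in N$ set $\phi(u,x_k):=w_j$. Otherwise add $w$ to $N$, insert all products $wx$ ($x\in X$) into $L$ (keeping it sorted), and for each $x_k$ with $w=ux_k$, $u\in N$, set $\phi(u,x_k):=w$. Output $N$ and $\phi$. *)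

From HB Require Import structures.
From mathcomp Require Import all_boot all_order all_algebra.
Set Implicit Arguments. Unset Strict Implicit. Unset Printing Implicit Defensive.
Import GRing.Theory.
Local Open Scope ring_scope.

(* Monomials of the free commutative monoid [X] on the n*m variables x_{ij},
   represented by exponent vectors; the variable x_{ij} is indexed by (i,j)
   with i : 'I_n (position, 0-based) and j : 'I_m (so x_{ij} <-> alpha^j e_i). *)
Definition mon (n m : nat) := {ffun 'I_n * 'I_m -> nat}.

Section Monoid.
Variables n m : nat.
Definition mone : mon n m := [ffun => 0%N].
Definition mmul (u w : mon n m) : mon n m := [ffun k => (u k + w k)%N].
Definition mvar (k : 'I_n * 'I_m) : mon n m := [ffun k' => nat_of_bool (k' == k)].
(* w / x_k (only meaningful when x_k divides w) *)
Definition mdivvar (w : mon n m) (k : 'I_n * 'I_m) : mon n m :=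
  [ffun k' => (w k' - nat_of_bool (k' == k))%N].
Definition Ind (w : mon n m) : {set 'I_n} := [set i | [exists j : 'I_m, 0 < w (i, j)]%N].

(* admissible (monomial) order, given by its strict part *)
Definition admissible (prec : rel (mon n m)) : Prop :=
  [/\ irreflexive prec, transitive prec,
      (forall u w, u != w -> prec u w || prec w u),
      (forall w, w != mone -> prec mone w) &
      (forall u w v, prec u w -> prec (mmul u v) (mmul w v))].

Definition lt_e (prec : rel (mon n m)) (u w : mon n m) : bool :=
  (#|Ind u| < #|Ind w|)%N || ((#|Ind u| == #|Ind w|) && prec u w).
End Monoid.

Section Syndrome.
Variables (F : fieldType) (n m r : nat) (alpha : F) (H : 'M[F]_(n, r)).
Definition psi (w : mon n m) : 'rV[F]_n := \row_i \sum_(j < m) (alpha ^+ j) *+ w (i, j).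
Definition xi (w : mon n m) : 'rV[F]_r := psi w *m H.
End Syndrome.

Section AlgorithmP.
Variables (F : fieldType) (n m r : nat) (alpha : F) (H : 'M[F]_(n, r)).
Variable prec : rel (mon n m).

Record state := State {
  stL : seq (mon n m);
  stN : seq (mon n m);
  stphi : mon n m -> 'I_n * 'I_m -> option (mon n m) }.

Definition le_e (u w : mon n m) := (u == w) || lt_e prec u w.

Fixpoint insert_sorted (w : mon n m) (L : seq (mon n m)) : seq (mon n m) :=
  match L with
  | [::] => [:: w]
  | y :: L' => if le_e w y then w :: L else y :: insert_sorted w L'
  end.

Definition upd (phi : mon n m -> 'I_n * 'I_m -> option (mon n m))
    (u : mon n m) (k : 'I_n * 'I_m) (v : mon n m) :=
  fun u' k' => if (u' == u) && (k' == k) then Some v else phi u' k'.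

Definition set_preds (N : seq (mon n m)) (w v : mon n m) phi :=
  foldr (fun k ph => if (0 < w k)%N && (mdivvar w k \in N)
                     then upd ph (mdivvar w k) k v else ph)
        phi (enum {: 'I_n * 'I_m}).

Definition stepP (s : state) : state :=
  match stL s with
  | [::] => s
  | w :: L' =>
    let N := stN s in
    match [seq v <- N | xi alpha H v == xi alpha H w] with
    | wj :: _ => State L' N (set_preds N w wj (stphi s))
    | [::] =>
      let N' := rcons N w in
      State (foldr (fun k L => insert_sorted (mmul w (mvar k)) L) L'
                   (enum {: 'I_n * 'I_m}))
            N' (set_preds N' w w (stphi s))
    end
  end.

Definition initP : state := State [:: mone n m] [::] (fun _ _ => None).

Definition runP (t : nat) : state := iter t stepP initP.

Definition canonical_forms (q : nat) (N : seq (mon n m)) : Prop :=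
  [/\ mone n m \in N,
      size (undup N) = (q ^ r)%N,
      {in N &, forall u w, xi alpha H u = xi alpha H w -> u = w} &
      (forall w, w \in N -> w != mone n m ->
         exists w', exists x, w' \in N /\ w = mmul w' (mvar x))].
End AlgorithmP.

(* Algorithm P keeps the following invariant: the words of N have pairwise
   distinct syndromes; every word of N or L is 1 or a one-variable extension
   of a word of N; every value recorded in phi lies in N and has the right
   syndrome; and for u in N either phi(u, x) is recorded or ux is still
   waiting in L.  Each iteration either shortens L or adds a word with a new
   syndrome to N, so |L| + (|X| + 1)(q^r - |N|) decreases and the algorithm
   stops.  When L is empty, induction on the degree of w shows that the
   syndrome of every monomial w is attained in N.  As alpha is a root of an
   irreducible polynomial of degree m over F_p, the powers 1, alpha, ...,
   alpha^(m-1) are independent over F_p, hence by counting span F_q; so psi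
   is onto F_q^n, and as H has full rank every syndrome is attained and
   |N| = q^(n-k). *)
From HB Require Import structures.
From mathcomp Require Import all_boot all_order all_algebra all_field.
From mathcomp Require Import zify.
Import GRing.Theory.
Local Open Scope ring_scope.
Set Implicit Arguments. Unset Strict Implicit. Unset Printing Implicit Defensive.

Section PowerBasis.
Variables (p m : nat) (F : finFieldType) (hchar : p \in [pchar F]).
Hypothesis hcard : #|F| = (p ^ m)%N.
Variables (alpha : F) (P : {poly 'F_p}).
Hypotheses (irrP : irreducible_poly P) (sizeP : size P = m.+1).
Hypothesis rootP : root (map_poly (fun c : 'F_p => (nat_of_ord c)%:R : F) P) alpha.

Local Notation K := (pPrimeCharType hchar).
Local Notation iota := (in_alg K).

Lemma Fp_scale1 (c : 'F_p) : c%:A = (nat_of_ord c)%:R :> K.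
Proof. by rewrite /GRing.scale /= /pprimeChar_scale mulr1. Qed.

Lemma root_in_alg : root (map_poly iota P) (alpha : K).
Proof. by rewrite (eq_map_poly Fp_scale1). Qed.

Lemma small_poly_root_eq0 (Q : {poly 'F_p}) :
  root (map_poly iota Q) (alpha : K) -> (size Q <= m)%N -> Q = 0.
Proof.
move=> rootQ sizeQ; apply/eqP/negPn/negP => nzQ.
have := (subfx_irreducibleP root_in_alg (irredp_neq0 irrP)).2 irrP Q rootQ nzQ.
by rewrite sizeP ltnNge sizeQ.
Qed.

Definition eval_digits (b : m.-tuple 'F_p) : K := (map_poly iota (Poly b)).[alpha].

Lemma eval_digits_inj : injective eval_digits.
Proof.
move=> b1 b2 eq_b; have: Poly b1 - Poly b2 = 0.
  apply: small_poly_root_eq0.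
    by rewrite /root rmorphB hornerD hornerN -/(eval_digits b1) eq_b subrr.
  rewrite (leq_trans (size_polyD _ _)) // size_polyN geq_max.
  by rewrite !(leq_trans (size_Poly _)) ?size_tuple.
move/eqP; rewrite subr_eq0 => /eqP eq_Poly.
apply/val_inj/(@eq_from_nth _ 0); first by rewrite !size_tuple.
by move=> i _; rewrite -coef_Poly eq_Poly coef_Poly.
Qed.

Lemma powers_span (c : F) :
  exists e : {ffun 'I_m -> nat}, c = \sum_(j < m) alpha ^+ j *+ e j.
Proof.
have: c \in codom eval_digits.
  apply: (inj_card_onto eval_digits_inj).
  by rewrite card_tuple card_Fp ?(pcharf_prime hchar) //; apply/eq_leq/hcard.
case/codomP => b ->; exists [ffun j : 'I_m => nat_of_ord b`_j].
rewrite /eval_digits (horner_coef_wide _ (_ : size _ <= m)%N); last first.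
  by rewrite size_map_poly (leq_trans (size_Poly _)) ?size_tuple.
apply: eq_bigr => j _.
by rewrite ffunE coef_map coef_Poly /= Fp_scale1 mulr_natl.
Qed.
End PowerBasis.

Section Monomials.
Variables n m : nat.
Implicit Types (u w : mon n m) (k : 'I_n * 'I_m).

Definition mdeg w : nat := \sum_k w k.

Lemma mdivvarK w k : (0 < w k)%N -> mmul (mdivvar w k) (mvar k) = w.
Proof.
move=> wk_gt0; apply/ffunP => k'; rewrite !ffunE.
by case: eqVneq => [->|_] /=; rewrite ?subn0 ?addn0 // subn1 addn1 prednK.
Qed.

Lemma mmulvK u k : mdivvar (mmul u (mvar k)) k = u.
Proof. by apply/ffunP => k'; rewrite !ffunE addnK. Qed.

Lemma mmulv_gt0 u k : (0 < mmul u (mvar k) k)%N.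
Proof. by rewrite !ffunE eqxx addn1. Qed.

Lemma mdeg_mmul u w : mdeg (mmul u w) = (mdeg u + mdeg w)%N.
Proof. by rewrite /mdeg -big_split; apply: eq_bigr => k _; rewrite ffunE. Qed.

Lemma mdeg_mvar k : mdeg (mvar k) = 1%N.
Proof.
rewrite /mdeg (bigD1 k) //= big1 => [|k' /negbTE nk]; last by rewrite ffunE nk.
by rewrite ffunE eqxx.
Qed.

Lemma mon_factor w : w != mone n m -> exists u k, w = mmul u (mvar k).
Proof.
move=> w_neq1; have [k wk_gt0] : exists k, (0 < w k)%N.
  apply/existsP; apply: contraNT w_neq1 => /existsPn w0.
  by apply/eqP/ffunP => k; rewrite ffunE; move: (w0 k); rewrite lt0n negbK => /eqP.
by exists (mdivvar w k), k; rewrite mdivvarK.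
Qed.

End Monomials.

Section Syndromes.
Variables (F : fieldType) (n m r : nat) (alpha : F) (H : 'M[F]_(n, r)).

Lemma psi_mmul (u w : mon n m) : psi alpha (mmul u w) = psi alpha u + psi alpha w.
Proof.
apply/rowP => i; rewrite !mxE -big_split /=.
by apply: eq_bigr => j _; rewrite ffunE mulrnDr.
Qed.

Lemma xi_mmul (u w : mon n m) : xi alpha H (mmul u w) = xi alpha H u + xi alpha H w.
Proof. by rewrite /xi psi_mmul mulmxDl. Qed.

Lemma xi_onto :
  (forall c : F, exists e : {ffun 'I_m -> nat}, c = \sum_(j < m) alpha ^+ j *+ e j) ->
  row_full H -> forall y : 'rV[F]_r, exists w : mon n m, xi alpha H w = y.
Proof.
move=> span /row_fullP [B BK] y.
have [e def_e] := fin_all_exists (fun i : 'I_n => span ((y *m B) 0 i)).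
exists [ffun ij : 'I_n * 'I_m => e ij.1 ij.2]; rewrite /xi.
suff -> : psi alpha [ffun ij : 'I_n * 'I_m => e ij.1 ij.2] = y *m B.
  by rewrite -mulmxA BK mulmx1.
apply/rowP => i; rewrite mxE [RHS]def_e.
by apply: eq_bigr => j _; rewrite ffunE.
Qed.
End Syndromes.

Section ListOperations.
Variables (n m : nat) (prec : rel (mon n m)).
Implicit Types (w x : mon n m) (L : seq (mon n m)) (ks : seq ('I_n * 'I_m)).

Lemma mem_insert_sorted x w L : (x \in insert_sorted prec w L) = (x == w) || (x \in L).
Proof. by elim: L => [|y L IH] //=; case: ifP => _; rewrite !in_cons // IH orbCA. Qed.

Lemma size_insert_sorted w L : size (insert_sorted prec w L) = (size L).+1.
Proof. by elim: L => [|y L IH] //=; case: ifP => _ //=; rewrite IH. Qed.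

Lemma mem_insert_succs x w L ks :
  (x \in foldr (fun k L => insert_sorted prec (mmul w (mvar k)) L) L ks) =
  (x \in L) || has (fun k => x == mmul w (mvar k)) ks.
Proof. by elim: ks => [|k ks IH] /=; rewrite ?orbF // mem_insert_sorted IH orbCA. Qed.

Lemma size_insert_succs w L ks :
  size (foldr (fun k L => insert_sorted prec (mmul w (mvar k)) L) L ks) =
  (size L + size ks)%N.
Proof. by elim: ks => [|k ks IH] /=; rewrite ?addn0 // size_insert_sorted IH addnS. Qed.

Lemma set_predsE N w v phi u k :
  set_preds N w v phi u k =
  if [&& (0 < w k)%N, mdivvar w k \in N & u == mdivvar w k] then Some v
  else phi u k.
Proof.
pose hit k' := [&& (0 < w k')%N, mdivvar w k' \in N, u == mdivvar w k' & k == k'].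
suff foldrE ks : foldr (fun k ph => if (0 < w k)%N && (mdivvar w k \in N)
                                    then upd ph (mdivvar w k) k v else ph) phi ks u k =
                 if has hit ks then Some v else phi u k.
  rewrite /set_preds foldrE; congr (if _ then _ else _).
  apply/hasP/idP => [[k' _ /and4P [? ? ? /eqP ->]]|]; first exact/and3P.
  by exists k; rewrite ?mem_enum // /hit eqxx andbT.
elim: ks => [|k' ks IH] //=; rewrite /hit.
have [wk|] /= := boolP (0 < w k')%N; last by rewrite IH.
have [dN|] /= := boolP (mdivvar w k' \in N); last by rewrite IH.
by rewrite /upd IH; case: (u == _); case: (k == k').
Qed.
End ListOperations.

Section Correctness.
Variables (F : finFieldType) (n m r : nat) (alpha : F) (H : 'M[F]_(n, r)).
Variable prec : rel (mon n m).
Local Notation xi := (xi alpha H).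
Local Notation mone := (mone n m).
Local Notation stepP := (stepP alpha H prec).
Local Notation table := (mon n m -> 'I_n * 'I_m -> option (mon n m)).
Implicit Types (u v w : mon n m) (N L : seq (mon n m)) (phi : table) (s : state n m).

Definition unit_or_succ N w := w = mone \/ exists u k, u \in N /\ w = mmul u (mvar k).

Definition sound_table N phi :=
  forall u k v, phi u k = Some v -> v \in N /\ xi v = xi (mmul u (mvar k)).

Record invP (s : state n m) : Prop := InvP {
  invP_uniq : uniq (stN s);
  invP_xi_inj : {in stN s &, injective xi};
  invP_L : {in stL s, forall w, unit_or_succ (stN s) w};
  invP_N : {in stN s, forall w, unit_or_succ (stN s) w};
  invP_sound : sound_table (stN s) (stphi s);
  invP_pending : forall u k, u \in stN s ->
    stphi s u k <> None \/ mmul u (mvar k) \in stL s;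
  invP_one : mone \in stN s \/ (stN s = [::] /\ stL s = [:: mone]) }.

Lemma unit_or_succ_sub N N' w :
  {subset N <= N'} -> unit_or_succ N w -> unit_or_succ N' w.
Proof. by move=> sNN' [->|[u [k [uN ->]]]]; [left | right; exists u, k; auto]. Qed.

Lemma sound_set_preds N N' w v phi :
  sound_table N' phi -> v \in N' -> xi v = xi w ->
  sound_table N' (set_preds N w v phi).
Proof.
move=> sound vN' xi_v u k v'; rewrite set_predsE.
case: ifP => [/and3P [wk _ /eqP ->] [<-]|_ /sound //].
by rewrite mdivvarK.
Qed.

Lemma pending_set_preds N w v phi L u k :
  u \in N -> phi u k <> None \/ mmul u (mvar k) \in w :: L ->
  set_preds N w v phi u k <> None \/ mmul u (mvar k) \in L.
Proof.
move=> uN; rewrite set_predsE in_cons.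
case=> [phi_uk|/orP [/eqP def_w|uL]]; [left; by case: ifP | left | by right].
by rewrite -def_w mmulv_gt0 mmulvK uN eqxx.
Qed.

Lemma invP_init : invP (initP n m).
Proof. by split => //= [w|]; [rewrite inE => /eqP ->; left | right]. Qed.

Lemma invP_step_old w L N phi wj :
  invP (State (w :: L) N phi) -> wj \in N -> xi wj = xi w ->
  invP (State L N (set_preds N w wj phi)).
Proof.
case=> /= uniqN injN succL succN sound pending one wjN xi_wj; split => //=.
- by move=> x xL; apply: succL; rewrite in_cons xL orbT.
- exact: sound_set_preds.
- by move=> u k uN; apply: pending_set_preds (pending u k uN).
- by case: one => [|[N0 _]]; [left | rewrite N0 in wjN].
Qed.

Lemma invP_step_new w L N phi :
  invP (State (w :: L) N phi) -> {in N, forall v, xi v != xi w} ->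
  invP (State (foldr (fun k L => insert_sorted prec (mmul w (mvar k)) L) L
                     (enum {: 'I_n * 'I_m}))
              (rcons N w) (set_preds (rcons N w) w w phi)).
Proof.
case=> /= uniqN injN succL succN sound pending one new_w.
have sub_N : {subset N <= rcons N w} by move=> x xN; rewrite mem_rcons in_cons xN orbT.
have wN' : w \in rcons N w by rewrite mem_rcons mem_head.
split => /=.
- by rewrite rcons_uniq uniqN andbT; apply/negP => /new_w; rewrite eqxx.
- move=> u v; rewrite !mem_rcons !in_cons.
  case/orP => [/eqP ->|uN]; case/orP => [/eqP ->|vN] // xi_uv.
  + by move: (new_w v vN); rewrite xi_uv eqxx.
  + by move: (new_w u uN); rewrite xi_uv eqxx.
  + exact: injN.
- move=> x; rewrite mem_insert_succs => /orP [xL|/hasP [k _ /eqP ->]].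
  + by apply: unit_or_succ_sub sub_N (succL x _); rewrite in_cons xL orbT.
  + by right; exists w, k.
- move=> x; rewrite mem_rcons in_cons => /orP [/eqP ->|xN].
  + exact/(unit_or_succ_sub sub_N)/succL/mem_head.
  + exact/(unit_or_succ_sub sub_N)/succN.
- by apply: sound_set_preds wN' _ => // u k v /sound [/sub_N vN ->].
- move=> u k; rewrite mem_rcons in_cons => /orP [/eqP ->|uN].
    right; rewrite mem_insert_succs; apply/orP; right.
    by apply/hasP; exists k; rewrite ?mem_enum.
  have [|uL] := pending_set_preds w (sub_N _ uN) (pending u k uN); first by left.
  by right; rewrite mem_insert_succs uL.
- case: one => [/sub_N|[N0 [w1 _]]]; left => //.
  by rewrite mem_rcons w1 mem_head.
Qed.

Lemma invP_step s : invP s -> invP (stepP s).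
Proof.
case: s => [[|w L] N phi] inv_s //; rewrite /stepP /=.
case E: [seq v <- N | xi v == xi w] => [|wj ?].
  apply: invP_step_new inv_s _ => v vN; apply/negP => /eqP xi_v.
  have : v \in [seq v <- N | xi v == xi w] by rewrite mem_filter xi_v eqxx.
  by rewrite E.
have : wj \in [seq v <- N | xi v == xi w] by rewrite E mem_head.
by rewrite mem_filter => /andP [/eqP xi_wj wjN]; apply: invP_step_old.
Qed.

Lemma invP_runP t : invP (runP alpha H prec t).
Proof. by elim: t => [|t IH]; [exact: invP_init | exact: invP_step]. Qed.

Lemma uniq_syndromes s : invP s -> uniq (map xi (stN s)).
Proof.
by move=> inv_s; rewrite (map_inj_in_uniq (invP_xi_inj inv_s)) (invP_uniq inv_s).
Qed.

Lemma size_N_le s : invP s -> (size (stN s) <= #|{: 'rV[F]_r}|)%N.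
Proof.
by move=> inv_s; rewrite -(size_map xi) -(card_uniqP (uniq_syndromes inv_s)) max_card.
Qed.

Definition measure s : nat :=
  (size (stL s) + (n * m).+1 * (#|{: 'rV[F]_r}| - size (stN s)))%N.

Lemma measure_step s : invP s -> stL s != [::] -> (measure (stepP s) < measure s)%N.
Proof.
move=> inv_s; have := size_N_le (invP_step inv_s).
case: s inv_s => [[|w L] N phi] inv_s //=; rewrite /measure /stepP /=.
case: [seq v <- N | xi v == xi w] => [|wj ?] /=; last by rewrite ltn_add2r.
rewrite size_insert_succs size_rcons -cardE card_prod !card_ord => size_le _.
rewrite -(subnSK size_le) mulnS; lia.
Qed.

Lemma stepP_done s : stL s = [::] -> stepP s = s.
Proof. by case: s => [[|? ?] ? ?] //= _. Qed.

Lemma iter_stepP_done t s : invP s -> (measure s <= t)%N -> stL (iter t stepP s) = [::].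
Proof.
elim: t s => [|t IH] s inv_s le_st.
  by move: le_st; rewrite leqn0 addn_eq0 size_eq0 => /andP [/eqP].
case L0: (stL s) => [|w L]; first by rewrite iter_fix // stepP_done.
rewrite iterSr; apply: IH; first exact: invP_step.
by rewrite -ltnS (leq_trans _ le_st) // measure_step // L0.
Qed.

Lemma runP_done : stL (runP alpha H prec (measure (initP n m))) = [::].
Proof. exact: iter_stepP_done invP_init (leqnn _). Qed.

Lemma mone_in_done s : invP s -> stL s = [::] -> mone \in stN s.
Proof. by move=> inv_s L0; case: (invP_one inv_s) => // [[_]]; rewrite L0. Qed.

Lemma table_total_done s u k : invP s -> stL s = [::] -> u \in stN s ->
  exists v, [/\ stphi s u k = Some v, v \in stN s & xi v = xi (mmul u (mvar k))].
Proof.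
move=> inv_s L0 uN; have [|] := invP_pending inv_s k uN; last by rewrite L0.
case E: (stphi s u k) => [v|] // _; have [vN xi_v] := invP_sound inv_s E.
by exists v.
Qed.

Lemma syndromes_attained s : invP s -> stL s = [::] ->
  forall w, exists2 v, v \in stN s & xi v = xi w.
Proof.
move=> inv_s L0.
suff attained d w : (mdeg w <= d)%N -> exists2 v, v \in stN s & xi v = xi w.
  by move=> w; apply: (attained (mdeg w)).
elim: d w => [|d IH] w; have [->|/mon_factor [u [k ->]]] := eqVneq w mone.
- by exists mone; rewrite ?mone_in_done.
- by rewrite mdeg_mmul mdeg_mvar addn1.
- by exists mone; rewrite ?mone_in_done.
rewrite mdeg_mmul mdeg_mvar addn1 ltnS => deg_u.
have [v vN xi_v] := IH u deg_u.
have [v' [_ v'N xi_v']] := table_total_done k inv_s L0 vN.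
by exists v' => //; rewrite xi_v' !xi_mmul xi_v.
Qed.

Lemma size_N_done s : invP s -> stL s = [::] ->
  (forall y : 'rV[F]_r, exists w, xi w = y) -> size (stN s) = #|{: 'rV[F]_r}|.
Proof.
move=> inv_s L0 onto; apply/eqP; rewrite eqn_leq size_N_le //=.
rewrite -(size_map xi) -(card_uniqP (uniq_syndromes inv_s)).
apply/subset_leq_card/subsetP => y _; have [w <-] := onto y.
by have [v vN <-] := syndromes_attained inv_s L0 w; apply: map_f.
Qed.
End Correctness.

Theorem theorem1p8
  (p m : nat) (hp : prime p) (hm : (0 < m)%N)
  (F : finFieldType) (hcard : #|F| = (p ^ m)%N) (hchar : p \in [pchar F])
  (alpha : F)
  (halpha : exists P : {poly 'F_p}, [/\ irreducible_poly P, size P = m.+1 &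
              root (map_poly (fun c : 'F_p => (nat_of_ord c)%:R : F) P) alpha])
  (n k : nat) (hk : (k <= n)%N)
  (H : 'M[F]_(n, n - k)) (hrank : \rank H = (n - k)%N)
  (prec : rel (mon n m)) (hprec : admissible prec) :
  exists t : nat,
    let s := runP alpha H prec t in
    [/\ stL s = [::],
        canonical_forms alpha H (p ^ m)%N (stN s) &
        forall (w : mon n m) (x : 'I_n * 'I_m), w \in stN s ->
          exists v, [/\ stphi s w x = Some v, v \in stN s &
                        xi alpha H v = xi alpha H (mmul w (mvar x))]].
Proof.
have [P [irrP sizeP rootP]] := halpha.
have onto : forall y : 'rV[F]_(n - k), exists w : mon n m, xi alpha H w = y.
  apply: xi_onto (powers_span hchar hcard irrP sizeP rootP) _.
  by rewrite /row_full hrank.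
exists (measure F (n - k) (initP n m)) => s.
have inv_s : invP alpha H s := invP_runP alpha H prec _.
have L0 : stL s = [::] := runP_done alpha H prec.
split => //.
  split; first exact: mone_in_done inv_s L0.
  - rewrite undup_id ?(invP_uniq inv_s) // (size_N_done inv_s L0 onto).
    by rewrite card_mx mul1n hcard.
  - exact: invP_xi_inj inv_s.
  - move=> w wN /negbTE w1.
    by case: (invP_N inv_s wN) => [/eqP|[w' [x]]]; [rewrite w1 | exists w', x].
by move=> w x; apply: table_total_done inv_s L0.
Qed.
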